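(* Let $\alpha_1,\dots,\alpha_n$ be real numbers and $\omega\in S_n$ with $\alpha_{\omega(1)}\le\alpha_{\omega(2)}\le\dots\le\alpha_{\omega(n)}$. Fix $k\in\{1,\dots,n-1\}$ with $\alpha_{\omega(k)}<\alpha_{\omega(k+1)}$ and let $b,c$ be real numbers with $\alpha_{\omega(k)}<c<b<\alpha_{\omega(k+1)}$ and $f(b)=f(c)$, where $f(t)=(t-\alpha_1)\cdots(t-\alpha_n)$. Put $B_j=\frac{b-\alpha_j}{c-\alpha_j}$ for $j=1,\dots,n$. Then $$B_{\omega(k+1)}\le B_{\omega(k+2)}\le\dots\le B_{\omega(n)}<1<B_{\omega(1)}\le B_{\omega(2)}\le\dots\le B_{\omega(k)}.$$ *)

From mathcomp Require Import all_boot all_order all_algebra all_fingroup.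
Set Implicit Arguments. Unset Strict Implicit. Unset Printing Implicit Defensive.
Import Order.TTheory GRing.Theory Num.Theory.
Local Open Scope ring_scope.

Definition poly_f (R : realFieldType) (n : nat) (alpha : 'I_n -> R) (t : R) : R :=
  \prod_(i < n) (t - alpha i).

Definition Bq (R : realFieldType) (n : nat) (alpha : 'I_n -> R) (b c : R) (j : 'I_n) : R :=
  (b - alpha j) / (c - alpha j).

From mathcomp Require Import all_boot all_order all_algebra all_fingroup.
From mathcomp Require Import ring lra.
Import Order.TTheory GRing.Theory Num.Theory.
Local Open Scope ring_scope.

(** For [c < b] the Möbius map [t |-> (b - t) / (c - t)] has derivative
    [(b - c) / (c - t)^2 > 0], so it increases on each side of its pole [c];
    it exceeds [1] left of [c] and stays below [1] right of [c]. The roots of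
    [f] left of the gap [(c, b)] are [alpha_(omega 1), ..., alpha_(omega k)] and
    those right of it are the others, which gives both monotone blocks and the
    separation by [1]. *)

Section MobiusRatio.

Variables (R : realFieldType) (b c : R).
Hypothesis lt_cb : c < b.

Lemma ratio_le_same_side (a1 a2 : R) :
  a1 <= a2 -> 0 < (c - a1) * (c - a2) ->
  (b - a1) / (c - a1) <= (b - a2) / (c - a2).
Proof.
move=> le_a12 side.
have [nz1 nz2] : c - a1 != 0 /\ c - a2 != 0.
  by apply/norP; rewrite -mulf_eq0 gt_eqF.
have diff : (b - a1) / (c - a1) - (b - a2) / (c - a2)
            = (b - c) * (a1 - a2) / ((c - a1) * (c - a2)).
  by field; rewrite nz1 nz2.
rewrite -subr_le0 diff pmulr_lle0 ?invr_gt0 //.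
by rewrite pmulr_rle0 ?subr_gt0 // subr_le0.
Qed.

Lemma ratio_le_below (a1 a2 : R) :
  a1 <= a2 -> a2 < c -> (b - a1) / (c - a1) <= (b - a2) / (c - a2).
Proof. by move=> le_a12 lt_a2c; apply: ratio_le_same_side => //; apply: mulr_gt0; lra. Qed.

Lemma ratio_le_above (a1 a2 : R) :
  a1 <= a2 -> c < a1 -> (b - a1) / (c - a1) <= (b - a2) / (c - a2).
Proof.
move=> le_a12 lt_ca1; apply: ratio_le_same_side => //.
by rewrite -mulrNN !opprB; apply: mulr_gt0; lra.
Qed.

Lemma ratio_gt1_below (a : R) : a < c -> 1 < (b - a) / (c - a).
Proof.
move=> lt_ac; have nz : c - a != 0 by rewrite subr_eq0 gt_eqF.
have -> : (b - a) / (c - a) = 1 + (b - c) / (c - a) by field.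
by rewrite ltrDl divr_gt0 // subr_gt0.
Qed.

Lemma ratio_lt1_above (a : R) : c < a -> (b - a) / (c - a) < 1.
Proof.
move=> lt_ca; have [nz nz'] : a - c != 0 /\ c - a != 0.
  by rewrite !subr_eq0 gt_eqF ?lt_eqF.
have -> : (b - a) / (c - a) = 1 - (b - c) / (a - c) by field; rewrite nz nz'.
by rewrite ltrBlDr ltrDl divr_gt0 // subr_gt0.
Qed.

End MobiusRatio.

(* Indices are 0-based: paper position p (1..n) is ordinal p-1.
   Paper's k (1 <= k <= n-1) is the nat k here, and omega(k), omega(k+1)
   are w at ordinals k-1 and k. *)
Theorem lemma8p1 (R : realFieldType) (n : nat) (alpha : 'I_n -> R) (w : 'S_n)
  (k : nat) (hk1 : (1 <= k)%N) (hkn : (k < n)%N) (b c : R) :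
  (forall i j : 'I_n, (i <= j)%N -> alpha (w i) <= alpha (w j)) ->
  (forall i j : 'I_n, i.+1 = k -> j = k :> nat ->
     alpha (w i) < c /\ c < b /\ b < alpha (w j)) ->
  poly_f alpha b = poly_f alpha c ->
  [/\ (forall i j : 'I_n, (k <= i)%N -> (i <= j)%N ->
         Bq alpha b c (w i) <= Bq alpha b c (w j)),
      (forall i : 'I_n, i.+1 = n -> Bq alpha b c (w i) < 1),
      (forall i : 'I_n, i = 0%N :> nat -> 1 < Bq alpha b c (w i))
    & (forall i j : 'I_n, (i <= j)%N -> (j < k)%N ->
         Bq alpha b c (w i) <= Bq alpha b c (w j))].
Proof.
move=> sorted gap _.
have lt_k1n : (k.-1 < n)%N by rewrite (leq_ltn_trans (leq_pred k)).
have [lt_low_c [lt_cb lt_b_high]] := gap (Ordinal lt_k1n) (Ordinal hkn) (prednK hk1) erefl.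
have above (i : 'I_n) : (k <= i)%N -> c < alpha (w i).
  by move=> le_ki; rewrite (lt_trans lt_cb) // (lt_le_trans lt_b_high) // sorted.
have below (i : 'I_n) : (i < k)%N -> alpha (w i) < c.
  move=> lt_ik; apply: le_lt_trans lt_low_c; apply: sorted => /=.
  by rewrite -ltnS prednK.
rewrite /Bq; split.
- by move=> i j le_ki le_ij; apply: ratio_le_above; rewrite ?sorted ?above.
- by move=> i last_i; apply: ratio_lt1_above; rewrite ?above // -ltnS last_i.
- by move=> i first_i; apply: ratio_gt1_below; rewrite ?below // first_i.
- by move=> i j le_ij lt_jk; apply: ratio_le_below; rewrite ?sorted ?below.
Qed.
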